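(* Consider the market and VCG mechanism described in the context, and let $\gamma>0$ be a weak-supermodularity constant of the market objective. Let $K\subseteq L$ and consider the profile $\mathcal{C}=\{c_l\}_{l\in L}$, where for $l\in K$ the function $c_l:\mathcal{X}_l\to\mathbb{R}_+$ is the true cost of bidder $l$ and for $l\notin K$ the function $c_l$ is an arbitrary fixed bid of bidder $l$ (not necessarily truthful). Assume the bidders in $K$ lose under $\mathcal{C}$, i.e. $x^*_l(\mathcal{C})=0$ for all $l\in K$. Let $\mathcal{B}_K=\{b_l\}_{l\in K}$ be any joint deviation, with each $b_l:\mathcal{X}_l\to\mathbb{R}_+$, $b_l(0)=0$, and let $\mathcal{B}=(\mathcal{C}_{-K},\mathcal{B}_K)$. Then $$\sum_{l\in K}u_l(\mathcal{B})\;\le\;\big[\gamma^{-1}-1\big]\big[J(\mathcal{C})-J(\mathcal{B})\big]\;\le\;\big[\gamma^{-1}-1\big]\big[J(\mathcal{C})-J(\mathcal{C}_{-K},\mathcal{B}^0_K)\big],$$ where $\mathcal{B}^0_K$ is the profile in which each $l\in K$ bids $b_l(x_l)=0$ for all $x_l\in\mathcal{X}_l$. (Since $u_l(\mathcal{C})=0$ for the losing bidders $l\in K$, this bounds the collective profit of the colluders $K$ from the deviation.)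
   Context: Market model. $L=\{1,\dots,|L|\}$ is a finite set of bidders and $t\ge1$ the number of types of supply. Bidder $l$ submits a bid function $b_l:\hat{\mathcal X}_l\to\mathbb{R}_+$ with $0\in\hat{\mathcal X}_l\subseteq\mathbb{R}^t_+$, $b_l(0)=0$; a bid profile is $\mathcal{B}=\{b_l\}_{l\in L}$. Fixed functions $d:\mathbb{R}^{t|L|}_+\times\mathbb{R}^p\to\mathbb{R}$ and $g:\mathbb{R}^{t|L|}_+\times\mathbb{R}^p\to\mathbb{R}^q$ are given. For $S\subseteq L$, $$J(\mathcal{B}_S)=\min\Big\{\sum_{l\in S}b_l(x_l)+d(x,y):\ x\in\textstyle\prod_{l\in L}\hat{\mathcal X}_l,\ y\in\mathbb{R}^p,\ g(x,y)\le0,\ x_l=0\ \forall l\notin S\Big\},$$ with value $+\infty$ if infeasible (minima are assumed attained when finite). Write $J(\mathcal{B})=J(\mathcal{B}_L)$ and $J(\mathcal{B}_{-K})=J(\mathcal{B}_{L\setminus K})$, $J(\mathcal{B}_{-l})=J(\mathcal{B}_{L\setminus\{l\}})$. $(x^*(\mathcal{B}),y^*(\mathcal{B}))$ denotes the minimizer for $S=L$ selected by a fixed tie-breaking rule. A mixed profile $(\mathcal{C}_{-K},\mathcal{B}_K)$ means bidders in $K$ use the functions in $\mathcal{B}_K$ and the others use those in $\mathcal{C}$. Standing assumption: for every profile considered, $J(\mathcal{B})<\infty$ and $J(\mathcal{B}_{-l})<\infty$ for every $l$. VCG mechanism (Clarke pivot): the payment to bidder $l$ is $p_l(\mathcal{B})=b_l(x^*_l(\mathcal{B}))+J(\mathcal{B}_{-l})-J(\mathcal{B})$,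 and the utility of bidder $l$ with true cost $c_l$ is $u_l(\mathcal{B})=p_l(\mathcal{B})-c_l(x^*_l(\mathcal{B}))$. Weak-supermodularity constant: $\gamma>0$ is such that for every bid profile $\mathcal{B}$ and all $K,S\subseteq L$ with $J(\mathcal{B}_{S\setminus K})<\infty$, $$\gamma\sum_{l\in K}\big[J(\mathcal{B}_{S\setminus\{l\}})-J(\mathcal{B}_S)\big]\le J(\mathcal{B}_{S\setminus K})-J(\mathcal{B}_S).$$ (The largest such $\gamma$ is the supermodularity ratio $\gamma_{\sup}$; the market objective is weakly supermodular if $\gamma_{\sup}>0$.) *)

From mathcomp Require Import all_boot.
From Stdlib Require Import Reals ClassicalEpsilon.
Set Implicit Arguments.
Unset Strict Implicit.
Unset Printing Implicit Defensive.
Local Open Scope R_scope.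

Definition vec (k : nat) := 'I_k -> R.
Definition zerov (k : nat) : vec k := fun _ => 0.
Arguments zerov k _ : clear implicits.

(* A bid profile for bidders L = 'I_n : bidder l bids the function b l on R^t
   (only its values on the offered set X l matter). *)
Definition profile (n t : nat) := 'I_n -> vec t -> R.

Definition valid_bid (t : nat) (Xl : vec t -> Prop) (b : vec t -> R) : Prop :=
  b (zerov t) = 0 /\ (forall z, Xl z -> 0 <= b z).

Definition valid_profile (n t : nat) (X : 'I_n -> vec t -> Prop)
  (P : profile n t) : Prop := forall l, valid_bid (X l) (P l).

Definition mix (n t : nat) (K : {set 'I_n}) (C B : profile n t) : profile n t :=
  fun l => if l \in K then B l else C l.

Definition zero_profile (n t : nat) : profile n t := fun _ _ => 0.
Arguments zero_profile n t _ _ : clear implicits.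

Section Market.
Variables (n t p q : nat) (X : 'I_n -> vec t -> Prop)
  (d : ('I_n -> vec t) -> vec p -> R)
  (g : ('I_n -> vec t) -> vec p -> vec q).

Definition feasible (S : {set 'I_n}) (x : 'I_n -> vec t) (y : vec p) : Prop :=
  (forall l, X l (x l)) /\ (forall i, g x y i <= 0) /\
  (forall l, l \notin S -> x l = zerov t).

Definition objective (P : profile n t) (S : {set 'I_n})
  (x : 'I_n -> vec t) (y : vec p) : R :=
  \big[Rplus/0]_(l in S) P l (x l) + d x y.

Definition is_minimizer (P : profile n t) (S : {set 'I_n})
  (xy : ('I_n -> vec t) * vec p) : Prop :=
  feasible S xy.1 xy.2 /\
  forall x' y', feasible S x' y' -> objective P S xy.1 xy.2 <= objective P S x' y'.

(* J(B_S): Some (minimum value) when the minimum is attained, None (= +oo)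
   otherwise. *)
Definition Jopt (P : profile n t) (S : {set 'I_n}) : option R :=
  match excluded_middle_informative (exists xy, is_minimizer P S xy) with
  | left H => let xy := proj1_sig (constructive_indefinite_description _ H) in
              Some (objective P S xy.1 xy.2)
  | right _ => None
  end.

Definition Jfinite (P : profile n t) (S : {set 'I_n}) : Prop := Jopt P S <> None.

(* Real value of J (meaningful only when Jfinite holds). *)
Definition J (P : profile n t) (S : {set 'I_n}) : R :=
  match Jopt P S with Some v => v | None => 0 end.

Definition minima_attained (P : profile n t) : Prop :=
  forall S, (exists x y, feasible S x y) ->
  (exists m, forall x y, feasible S x y -> m <= objective P S x y) ->
  Jfinite P S.

Definition standing (P : profile n t) : Prop :=
  Jfinite P setT /\ forall l, Jfinite P (setT :\ l).

Definition tie_breaking (xstar : profile n t -> ('I_n -> vec t) * vec p) : Prop :=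
  forall P, valid_profile X P -> Jfinite P setT -> is_minimizer P setT (xstar P).

Definition weak_supermodular (gamma : R) : Prop :=
  forall P, valid_profile X P -> forall S K : {set 'I_n},
    Jfinite P (S :\: K) -> Jfinite P S -> (forall l, l \in K -> Jfinite P (S :\ l)) ->
    gamma * \big[Rplus/0]_(l in K) (J P (S :\ l) - J P S) <= J P (S :\: K) - J P S.

Definition payment (xstar : profile n t -> ('I_n -> vec t) * vec p)
  (P : profile n t) (l : 'I_n) : R :=
  P l ((xstar P).1 l) + J P (setT :\ l) - J P setT.

Definition utility (xstar : profile n t -> ('I_n -> vec t) * vec p)
  (c : vec t -> R) (P : profile n t) (l : 'I_n) : R :=
  payment xstar P l - c ((xstar P).1 l).

End Market.

(** The VCG utility of bidder [l] is [b_l(x_l) - c_l(x_l)] plus its marginal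
    contribution [J(B_{-l}) - J(B)].  Weak supermodularity bounds the sum of
    the marginal contributions of [K] by [γ^{-1} (J(B_{-K}) - J(B))], and
    since the bidders of [K] lose under [C], removing them costs nothing:
    [J(B_{-K}) = J(C_{-K}) = J(C)].  The bid terms add up to
    [J(B) - obj_C(x^*(B)) <= J(B) - J(C)], which gives the first inequality.
    The second follows from [J(B^0) <= J(B)] when [γ <= 1]; when [γ > 1],
    weak supermodularity forces every marginal contribution to vanish, so
    [J(B^0) = J(B^0_{-K}) = J(C) = J(B_{-K}) >= J(B)]. *)

From HB Require Import structures.
From mathcomp Require Import all_boot.
From Stdlib Require Import Reals Lra ClassicalEpsilon.
Set Implicit Arguments.
Unset Strict Implicit.
Unset Printing Implicit Defensive.
Local Open Scope R_scope.

HB.instance Definition _ :=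
  Monoid.isComLaw.Build R 0 Rplus (fun a b c => esym (Rplus_assoc a b c))
    Rplus_comm Rplus_0_l.

Section Market.
Variables (n t p q : nat) (X : 'I_n -> vec t -> Prop)
  (d : ('I_n -> vec t) -> vec p -> R) (g : ('I_n -> vec t) -> vec p -> vec q).
Implicit Types (S D K : {set 'I_n}) (P : profile n t).

Lemma Jfinite_minimizer P S xy :
  is_minimizer X d g P S xy -> Jfinite X d g P S.
Proof.
move=> min_xy; rewrite /Jfinite /Jopt.
by case: excluded_middle_informative => // [[]]; exists xy.
Qed.

Lemma J_minimizer P S : Jfinite X d g P S ->
  exists xy, is_minimizer X d g P S xy /\ J X d g P S = objective d P S xy.1 xy.2.
Proof.
rewrite /Jfinite /J /Jopt.
case: excluded_middle_informative => [ex_min|] // _.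
exists (proj1_sig (constructive_indefinite_description _ ex_min)); split => //.
exact: proj2_sig (constructive_indefinite_description _ ex_min).
Qed.

Lemma J_le_objective P S x y : Jfinite X d g P S ->
  feasible X g S x y -> J X d g P S <= objective d P S x y.
Proof. by move=> /J_minimizer [xy [[_ min_xy] ->]]; apply: min_xy. Qed.

Lemma J_minimizer_value P S xy :
  is_minimizer X d g P S xy -> J X d g P S = objective d P S xy.1 xy.2.
Proof.
move=> min_xy; have [xy' [[f_xy' min_xy'] ->]] := J_minimizer (Jfinite_minimizer min_xy).
case: min_xy => f_xy min_xy.
by apply: Rle_antisym; [apply: min_xy' | apply: min_xy].
Qed.

Lemma objective_setT P S x y : valid_profile X P ->
  (forall l, l \notin S -> x l = zerov t) ->
  objective d P S x y = objective d P setT x y.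
Proof.
move=> vP x_out; rewrite /objective; congr (_ + _).
rewrite big_mkcond [in RHS]big_mkcond; apply: eq_bigr => l _.
by rewrite in_setT; case: ifP => // /negbT /x_out ->; case: (vP l).
Qed.

Lemma feasible_subset S S' x y :
  S' \subset S -> feasible X g S' x y -> feasible X g S x y.
Proof.
move=> sub [x_in [g_le x_out]]; split; [done | split=> // l lS].
by apply: x_out; apply: contra lS; apply: (subsetP sub).
Qed.

Lemma J_antimonotone P S S' : valid_profile X P -> S' \subset S ->
  Jfinite X d g P S -> Jfinite X d g P S' -> J X d g P S <= J X d g P S'.
Proof.
move=> vP sub fS fS'; have [[x y] [[f_xy _] ->]] := J_minimizer fS'.
have f_xy_S := feasible_subset sub f_xy.
apply: Rle_trans (J_le_objective fS f_xy_S) _.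
rewrite /= (objective_setT _ vP); last by case: f_xy_S => _ [].
by rewrite (objective_setT _ vP); [apply: Rle_refl | case: f_xy => _ []].
Qed.

Lemma J_le_bids P P' S : (forall l z, X l z -> P l z <= P' l z) ->
  Jfinite X d g P S -> Jfinite X d g P' S -> J X d g P S <= J X d g P' S.
Proof.
move=> le_bids fS fS'; have [[x y] [[f_xy _] ->]] := J_minimizer fS'.
apply: Rle_trans (J_le_objective fS f_xy) _; apply: Rplus_le_compat_r.
apply: (big_ind2 Rle); [exact: Rle_refl | by move=> *; apply: Rplus_le_compat |].
by move=> l _; apply: le_bids; case: f_xy.
Qed.

Lemma mix_off_K K (C b : profile n t) l : l \notin K -> mix K C b l = C l.
Proof. by rewrite /mix => /negbTE ->. Qed.

Lemma valid_mix K (C b : profile n t) : valid_profile X C ->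
  (forall l, l \in K -> valid_bid (X l) (b l)) -> valid_profile X (mix K C b).
Proof. by move=> vC vb l; rewrite /mix; case: ifP => [/vb|_]. Qed.

Lemma objective_mix K (C b : profile n t) x y :
  objective d (mix K C b) setT x y =
  objective d C setT x y + \big[Rplus/0]_(l in K) (mix K C b l (x l) - C l (x l)).
Proof.
have sum_mix : \big[Rplus/0]_(l in setT) mix K C b l (x l) =
    \big[Rplus/0]_(l in setT) C l (x l) +
    \big[Rplus/0]_(l in K) (mix K C b l (x l) - C l (x l)).
  rewrite big_mkcond [X in _ = X + _]big_mkcond [X in _ = _ + X]big_mkcond.
  rewrite -big_split /=; apply: eq_bigr => l _; rewrite in_setT /mix.
  by case: ifP => _; ring.
by rewrite /objective sum_mix !Rplus_assoc (Rplus_comm (\big[_/_]_(l in K) _)).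
Qed.

Lemma sum_utility (xstar : profile n t -> ('I_n -> vec t) * vec p)
    (c : profile n t) P K :
  \big[Rplus/0]_(l in K) utility X d g xstar (c l) P l =
  \big[Rplus/0]_(l in K) (J X d g P (setT :\ l) - J X d g P setT) +
  \big[Rplus/0]_(l in K) (P l ((xstar P).1 l) - c l ((xstar P).1 l)).
Proof.
have shuffle (a j j' e : R) : a + j - j' - e = j - j' + (a - e) by ring.
by rewrite -big_split /=; apply: eq_bigr => l _; apply: shuffle.
Qed.

Section WeakSupermodularity.
Variables (gamma : R) (P : profile n t).
Hypotheses (wsm : weak_supermodular X d g gamma) (vP : valid_profile X P).

Lemma sum_marginals_le S K : 0 < gamma ->
  Jfinite X d g P (S :\: K) -> Jfinite X d g P S ->
  (forall l, l \in K -> Jfinite X d g P (S :\ l)) ->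
  \big[Rplus/0]_(l in K) (J X d g P (S :\ l) - J X d g P S)
    <= / gamma * (J X d g P (S :\: K) - J X d g P S).
Proof.
move=> gamma_gt0 fSK fS fSl; have wsm_S := wsm vP fSK fS fSl.
apply: (Rmult_le_reg_l gamma) => //.
by rewrite -Rmult_assoc Rinv_r ?Rmult_1_l //; lra.
Qed.

(* For [γ > 1] the inequality [γ (J(S_{-a}) - J(S)) <= J(S_{-a}) - J(S)] and
   antimonotonicity of [J] leave only [J(S_{-a}) = J(S)]. *)
Lemma J_setTD_gt1 D : 1 < gamma ->
  (forall D', D' \subset D -> Jfinite X d g P (setT :\: D')) ->
  J X d g P (setT :\: D) = J X d g P setT.
Proof.
move=> gamma_gt1; have [m] := ubnP #|D|; elim: m D => // m IH D.
rewrite ltnS => cardD fin_sub.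
have [->|[a aD]] := set_0Vmem D; first by rewrite setD0.
set D' := D :\ a; set S := setT :\: D'.
have eq_D : setT :\: D = S :\ a by rewrite setDDl setUC setD1K.
have fD : Jfinite X d g P (S :\ a) by rewrite -eq_D; apply: fin_sub.
have fD' : Jfinite X d g P S by apply: fin_sub; apply: subD1set.
rewrite -(IH D'); last first.
- by move=> E sub; apply: fin_sub; apply: subset_trans sub (subD1set D a).
- by move: cardD; rewrite (cardsD1 a D) aD add1n.
have fa l : l \in [set a] -> Jfinite X d g P (S :\ l) by move/set1P ->.
have wsm_a := wsm vP fD fD' fa.
rewrite big_set1 in wsm_a.
have mono := J_antimonotone vP (subD1set S a) fD' fD.
rewrite eq_D -/S; apply: Rle_antisym; last exact: mono.
by nra.
Qed.

End WeakSupermodularity.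

Section LosingColluders.
Variables (K : {set 'I_n}) (C P : profile n t) (xC : ('I_n -> vec t) * vec p).
Hypotheses (vC : valid_profile X C) (min_C : is_minimizer X d g C setT xC)
  (xC_K : forall l, l \in K -> xC.1 l = zerov t).
Hypotheses (vP : valid_profile X P) (P_off_K : forall l, l \notin K -> P l = C l)
  (fP : Jfinite X d g P setT) (attained_P : minima_attained X d g P).

Lemma objective_off_K x y : (forall l, l \in K -> x l = zerov t) ->
  objective d P setT x y = objective d C setT x y.
Proof.
move=> x_K; rewrite /objective; congr (_ + _); apply: eq_bigr => l _.
have [lK|lK] := boolP (l \in K); last by rewrite P_off_K.
by rewrite x_K //; case: (vP l) => ->; case: (vC l) => ->.
Qed.

Lemma feasible_xC S : setT :\: K \subset S -> feasible X g S xC.1 xC.2.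
Proof.
move=> sub; case: min_C => [[x_in [g_le _]] _]; split; [done | split=> // l lS].
by apply: xC_K; apply: contraNT lS => lK; apply: (subsetP sub); rewrite !inE lK.
Qed.

Lemma Jfinite_off_K S : setT :\: K \subset S -> Jfinite X d g P S.
Proof.
move=> sub; apply: attained_P; first by exists xC.1, xC.2; apply: feasible_xC.
exists (J X d g P setT) => x y f_xy.
rewrite (objective_setT _ vP); last by case: f_xy => _ [].
exact: J_le_objective fP (feasible_subset (subsetT S) f_xy).
Qed.

Lemma J_remove_losers : J X d g P (setT :\: K) = J X d g C setT.
Proof.
have out_K x : (forall l, l \notin setT :\: K -> x l = zerov t) ->
    forall l, l \in K -> x l = zerov t.
  by move=> x_out l lK; apply: x_out; rewrite !inE lK.
have xC_out l : l \notin setT :\: K -> xC.1 l = zerov t.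
  by rewrite !inE andbT negbK; apply: xC_K.
have fPK := Jfinite_off_K (subxx _).
apply: Rle_antisym.
- apply: Rle_trans (J_le_objective fPK (feasible_xC (subxx _))) _.
  rewrite (objective_setT _ vP) // objective_off_K; last exact: out_K xC_out.
  by rewrite (J_minimizer_value min_C); apply: Rle_refl.
- have [[x y] [[f_xy _] ->]] := J_minimizer fPK.
  have x_out : forall l, l \notin setT :\: K -> x l = zerov t by case: f_xy => _ [].
  rewrite /= (objective_setT _ vP) // objective_off_K; last exact: out_K x_out.
  exact: J_le_objective (Jfinite_minimizer min_C) (feasible_subset (subsetT _) f_xy).
Qed.

End LosingColluders.

End Market.

Theorem theorem1 (n t p q : nat) (X : 'I_n -> vec t -> Prop)
  (d : ('I_n -> vec t) -> vec p -> R) (g : ('I_n -> vec t) -> vec p -> vec q)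
  (xstar : profile n t -> ('I_n -> vec t) * vec p) (gamma : R)
  (K : {set 'I_n}) (C b : profile n t) :
  (forall l, X l (zerov t)) ->
  (forall l z, X l z -> forall i, 0 <= z i) ->
  0 < gamma ->
  weak_supermodular X d g gamma ->
  tie_breaking X d g xstar ->
  valid_profile X C ->
  (forall l, l \in K -> valid_bid (X l) (b l)) ->
  (forall P : profile n t, P = C \/ P = mix K C b \/ P = mix K C (zero_profile n t) ->
     standing X d g P /\ minima_attained X d g P) ->
  (forall l, l \in K -> (xstar C).1 l = zerov t) ->
  \big[Rplus/0]_(l in K) utility X d g xstar (C l) (mix K C b) l
    <= (/ gamma - 1) * (J X d g C setT - J X d g (mix K C b) setT)
  /\ (/ gamma - 1) * (J X d g C setT - J X d g (mix K C b) setT)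
    <= (/ gamma - 1) * (J X d g C setT - J X d g (mix K C (zero_profile n t)) setT).
Proof.
move=> _ _ gamma_gt0 wsm tb vC vb std xC_K.
set B := mix K C b; set B0 := mix K C (zero_profile n t).
have vB : valid_profile X B := valid_mix vC vb.
have vB0 : valid_profile X B0.
  by apply: valid_mix vC _ => l _; split=> // z _; apply: Rle_refl.
have [[fC _] _] := std C (or_introl erefl).
have [[fB fB_l] attB] := std B (or_intror (or_introl erefl)).
have [[fB0 _] attB0] := std B0 (or_intror (or_intror erefl)).
have min_C := tb C vC fC.
have JB_K := J_remove_losers vC min_C xC_K vB (mix_off_K C b) fB attB.
have JB0_K := J_remove_losers vC min_C xC_K vB0 (mix_off_K C _) fB0 attB0.
have fB_K := Jfinite_off_K min_C xC_K vB fB attB (subxx _).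
have B0_le_B : J X d g B0 setT <= J X d g B setT.
  apply: J_le_bids fB0 fB => l z Xz; rewrite /B0 /B /mix.
  by case: ifP => [/vb [_]|_]; [apply | apply: Rle_refl].
have marginals := sum_marginals_le wsm vB gamma_gt0 fB_K fB (fun l _ => fB_l l).
have JB_xB := J_minimizer_value (tb B vB fB).
have JC_le := J_le_objective fC (proj1 (tb B vB fB)).
split.
- rewrite sum_utility; move: JB_xB; rewrite objective_mix -/B => JB_xB.
  have -> : (/ gamma - 1) * (J X d g C setT - J X d g B setT) =
    / gamma * (J X d g C setT - J X d g B setT) - (J X d g C setT - J X d g B setT).
    by ring.
  rewrite JB_K in marginals; lra.
- have [gamma_le1|gamma_gt1] := Rle_lt_dec gamma 1.
    apply: Rmult_le_compat_l; last lra.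
    by have := Rinv_le_contravar _ _ gamma_gt0 gamma_le1; rewrite Rinv_1; lra.
  have JB0_flat : J X d g B0 (setT :\: K) = J X d g B0 setT.
    apply: (J_setTD_gt1 wsm vB0 gamma_gt1) => D sub.
    exact: (Jfinite_off_K min_C xC_K vB0 fB0 attB0 (setDS _ sub)).
  have := J_antimonotone vB (subsetT (setT :\: K)) fB fB_K.
  rewrite JB_K -JB0_K JB0_flat => B_le_B0.
  by rewrite (Rle_antisym _ _ B0_le_B B_le_B0); lra.
Qed.
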